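(* Let $m,n$ be positive integers and $(A,\boldsymbol{\gamma})\in[0,1)^{m\times n}\times[0,1)^m$. If $\langle A\boldsymbol{q}-\boldsymbol{\gamma}\rangle>0$ for every $\boldsymbol{q}\in\mathbb{Z}^n\setminus\{\boldsymbol{0}\}$, then $(A,\boldsymbol{\gamma})\in\Omega(m,n)$ if and only if $S_1(A,\boldsymbol{\gamma})<+\infty$.
   Context: $[0,1)^{m\times n}$ is the set of real $m\times n$ matrices with entries in $[0,1)$. For $\boldsymbol{x}\in\mathbb{R}^n$, $\|\boldsymbol{x}\|=\max_i|x_i|$; for $\boldsymbol{y}\in\mathbb{R}^m$, $\langle\boldsymbol{y}\rangle=\min_{\boldsymbol{p}\in\mathbb{Z}^m}\|\boldsymbol{y}-\boldsymbol{p}\|$. For $\psi:\mathbb{N}\to[0,\infty)$, $W_{m,n}(\psi)$ is the set of pairs $(A,\boldsymbol{\gamma})$ such that $\langle A\boldsymbol{q}-\boldsymbol{\gamma}\rangle<\psi(\|\boldsymbol{q}\|)$ for infinitely many $\boldsymbol{q}\in\mathbb{Z}^n$. ''Decreasing'' means non-increasing. $\mathcal{D}$ is the set of decreasing $\psi:\mathbb{N}\to[0,\infty)$ with $\sum_{q\ge1}q^{n-1}\psi(q)^m=\infty$; $\Omega(m,n)=\bigcap_{\psi\in\mathcal{D}}W_{m,n}(\psi)$. $S_1(A,\boldsymbol{\gamma})=\sum_{t=1}^\infty t^{n-1}\min_{\boldsymbol{q}\in\mathbb{Z}^n,\ 1\le\|\boldsymbol{q}\|\le t}\langle A\boldsymbol{q}-\boldsymbol{\gamma}\rangle^m$.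 *)

From HB Require Import structures.
From mathcomp Require Import all_boot all_order all_algebra.
From mathcomp Require Import all_classical all_reals all_analysis.
Set Implicit Arguments. Unset Strict Implicit. Unset Printing Implicit Defensive.
Import Order.TTheory GRing.Theory Num.Theory.
Local Open Scope classical_set_scope.
Local Open Scope ring_scope.

Section Defs.
Variable R : realType.

Definition supnormZ (n : nat) (q : 'cV[int]_n) : nat := (\max_(i < n) `|q i ord0|%N)%N.

Definition distZm (m : nat) (y : 'cV[R]_m) : R :=
  inf [set \big[Num.max/0]_(i < m) `|y i ord0 - (p i ord0)%:~R| | p in [set: 'cV[int]_m]].

Definition Aqg (m n : nat) (A : 'M[R]_(m, n)) (g : 'cV[R]_m) (q : 'cV[int]_n) : 'cV[R]_m :=
  A *m map_mx (fun z : int => z%:~R) q - g.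

Definition W (m n : nat) (psi : nat -> R) : set ('M[R]_(m, n) * 'cV[R]_m) :=
  [set Ag : 'M[R]_(m, n) * 'cV[R]_m | infinite_set [set q : 'cV[int]_n | distZm (Aqg Ag.1 Ag.2 q) < psi (supnormZ q)]].

(* the class D: decreasing psi : N -> [0,oo) with sum q^(n-1) psi(q)^m = oo
   (N = {1,2,...}; psi 0 is irrelevant and only required to be >= 0) *)
Definition inD (m n : nat) (psi : nat -> R) : Prop :=
  (forall t, 0 <= psi t) /\
  (forall a b : nat, (1 <= a)%N -> (a <= b)%N -> psi b <= psi a) /\
  (\sum_(1 <= q <oo) ((q%:R ^+ (n.-1) * psi q ^+ m)%:E) = +oo)%E.

Definition Omega (m n : nat) : set ('M[R]_(m, n) * 'cV[R]_m) :=
  [set Ag : 'M[R]_(m, n) * 'cV[R]_m | forall psi : nat -> R, @inD m n psi -> @W m n psi Ag].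

Definition S1_term (m n : nat) (A : 'M[R]_(m, n)) (g : 'cV[R]_m) (t : nat) : R :=
  t%:R ^+ (n.-1) *
  inf [set distZm (Aqg A g q) ^+ m |
         q in [set q : 'cV[int]_n | (1 <= supnormZ q <= t)%N]].

Definition S1 (m n : nat) (A : 'M[R]_(m, n)) (g : 'cV[R]_m) : \bar R :=
  (\sum_(1 <= t <oo) (S1_term A g t)%:E)%E.

End Defs.
Arguments W {R} m n psi.
Arguments inD {R} m n psi.
Arguments Omega {R} m n.

From HB Require Import structures.
From mathcomp Require Import all_boot all_order all_algebra.
From mathcomp Require Import all_classical all_reals all_analysis.
From mathcomp Require Import finmap zify.
Import Order.TTheory GRing.Theory Num.Theory.
Local Open Scope classical_set_scope.
Local Open Scope ring_scope.

(* If S_1 diverges, the best-approximation function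
   psi(t) = min_{1 <= ||q|| <= t} <Aq - gamma> is decreasing, the terms of S_1 are
   exactly t^(n-1) psi(t)^m, so psi lies in D; but no q satisfies
   <Aq - gamma> < psi(||q||), so (A, gamma) is not in W(psi).
   Conversely, if (A, gamma) is not in W(psi) for some psi in D, then
   <Aq - gamma> >= psi(||q||) for all but finitely many q, and the finitely many
   exceptions are nonzero, hence at distance >= c > 0.  So every q with
   1 <= ||q|| <= t satisfies <Aq - gamma> >= k psi(t) for a fixed k > 0, and
   S_1 dominates k^m times the divergent series of psi. *)

Lemma finite_set_argmin {T : choiceType} {d} {X : orderType d} (f : T -> X) (S : set T) :
  finite_set S -> S !=set0 -> exists2 x, S x & forall y, S y -> (f x <= f y)%O.
Proof.
move=> /finite_fsetP[B ->] [z zB].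
case: (@arg_minP _ _ _ [` zB]%fset xpredT (fun i : B => f (fsval i))) => // i _ imin.
by exists (fsval i) => [|y yB]; [exact: fsvalP | exact: (imin [` yB]%fset)].
Qed.

Lemma finite_set_ubound {T : choiceType} (f : T -> nat) (S : set T) :
  finite_set S -> exists N, forall y, S y -> (f y <= N)%N.
Proof.
move=> /finite_fsetP[B ->]; exists (\max_(y <- enum_fset B) f y) => y yB.
exact: leq_bigmax_seq.
Qed.

Lemma inf_image_argmin {R : realType} {T : Type} {S : set T} {f : T -> R} x :
  S x -> (forall y, S y -> f x <= f y) -> inf [set f y | y in S] = f x.
Proof.
move=> Sx xmin; apply/le_anti/andP; split.
  by apply: ge_inf; [exists (f x) => _ [y Sy <-]; exact: xmin | exists x].
by apply: lb_le_inf => [|_ [y Sy <-]]; [exists (f x), x | exact: xmin].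
Qed.

Lemma supnormZ_coord {n} (q : 'cV[int]_n) i j : (`|q i j|%N <= supnormZ q)%N.
Proof. by rewrite [j]ord1 /supnormZ; rewrite (bigD1 i) //= leq_maxl. Qed.

Lemma supnormZ_eq0 {n} (q : 'cV[int]_n) : (supnormZ q == 0%N) = (q == 0).
Proof.
apply/eqP/eqP => [q0|->]; last by apply/eqP; rewrite -leqn0; apply/bigmax_leqP => i _; rewrite mxE.
apply/matrixP => i j; apply/eqP; rewrite mxE -absz_eq0 -leqn0.
by rewrite -[X in (_ <= X)%N]q0 supnormZ_coord.
Qed.

Lemma finite_supnormZ_le n t : finite_set [set q : 'cV[int]_n | (supnormZ q <= t)%N].
Proof.
pose shift (k : 'M['I_t.*2.+1]_(n, 1)) : 'cV[int]_n := \matrix_(i, j) ((k i j)%:Z - t%:Z).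
apply: (@sub_finite_set _ _ (shift @` setT)); last exact/finite_image/finite_finset.
move=> q /= qt; exists (\matrix_(i, j) inord (absz (q i j + t%:Z))) => //.
apply/matrixP => i j; have qijt := leq_trans (supnormZ_coord q i j) qt.
rewrite !mxE inordK; case: (q i j) qijt => k /=; rewrite ?NegzE; lia.
Qed.

Definition punctured_ballZ n t : set 'cV[int]_n := [set q | (1 <= supnormZ q <= t)%N].

Lemma finite_punctured_ballZ n t : finite_set (punctured_ballZ n t).
Proof. by apply: sub_finite_set (finite_supnormZ_le n t) => q /andP[]. Qed.

Lemma punctured_ballZ_neq0 {n t} : (0 < n)%N -> (1 <= t)%N -> punctured_ballZ n t !=set0.
Proof.
case: n => // n _ t1; exists (const_mx 1); apply/andP; split.
  by have := supnormZ_coord (const_mx 1 : 'cV[int]_n.+1) ord0 ord0; rewrite mxE.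
by apply: leq_trans t1; apply/bigmax_leqP => i _; rewrite mxE.
Qed.

Lemma distZm_ge0 (R : realType) m (y : 'cV[R]_m) : 0 <= distZm y.
Proof.
apply: lb_le_inf => [|_ [p _ <-]]; first by eexists; exists 0.
by elim/big_ind: _ => // x z x0 z0; rewrite le_max x0.
Qed.

Lemma lee_nneseries_from (R : realType) (u v : (\bar R)^nat) N :
  (forall i, (N <= i)%N -> (0 <= u i)%E) -> (forall i, (N <= i)%N -> (u i <= v i)%E) ->
  (\sum_(N <= i <oo) u i <= \sum_(N <= i <oo) v i)%E.
Proof.
move=> u0 uv; rewrite (eseries_cond u) (eseries_cond v).
by apply: lee_nneseries => [i _ /andP[_ /u0]|i /andP[_ /uv]].
Qed.

Section MinimalDistance.
Context {R : realType} {m n : nat} (A : 'M[R]_(m, n)) (g : 'cV[R]_m).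

Let dist q := distZm (Aqg A g q).

Definition min_dist t : R := inf [set dist q | q in punctured_ballZ n t].

Lemma min_dist_le t q : punctured_ballZ n t q -> min_dist t <= dist q.
Proof.
move=> qt; apply: ge_inf; last by exists q.
by exists 0 => _ [q' _ <-]; exact: distZm_ge0.
Qed.

Lemma min_dist_attained {t} : punctured_ballZ n t !=set0 ->
  exists2 q, punctured_ballZ n t q & min_dist t = dist q.
Proof.
move=> /(finite_set_argmin dist _ (finite_punctured_ballZ n t))[q qt qmin].
by exists q => //; exact: inf_image_argmin.
Qed.

Lemma min_dist_ge0 t : 0 <= min_dist t.
Proof.
have [ball0|/set0P/min_dist_attained[q _ ->]] := eqVneq (punctured_ballZ n t) set0.
  by rewrite /min_dist ball0 image_set0 inf0.
exact: distZm_ge0.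
Qed.

Lemma min_dist_nonincreasing a b : (0 < n)%N -> (1 <= a)%N -> (a <= b)%N ->
  min_dist b <= min_dist a.
Proof.
move=> n0 a1 ab; have [q /andP[q1 qa] ->] := min_dist_attained (punctured_ballZ_neq0 n0 a1).
by apply: min_dist_le; rewrite /punctured_ballZ /= q1 (leq_trans qa ab).
Qed.

Lemma min_dist_gt0 t : (0 < n)%N -> (1 <= t)%N ->
  (forall q, q != 0 -> 0 < dist q) -> 0 < min_dist t.
Proof.
move=> n0 t1 dist_gt0; have [q /andP[q1 _] ->] := min_dist_attained (punctured_ballZ_neq0 n0 t1).
by apply: dist_gt0; rewrite -supnormZ_eq0 -lt0n.
Qed.

Lemma S1_termE t : (0 < m)%N -> S1_term A g t = t%:R ^+ n.-1 * min_dist t ^+ m.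
Proof.
move=> m0; congr (_ * _); rewrite /S1_term.
have [ball0|/set0P/min_dist_attained[q qt qmin]] := eqVneq (punctured_ballZ n t) set0.
  by rewrite /min_dist -/(punctured_ballZ n t) ball0 !image_set0 inf0 expr0n gtn_eqF.
rewrite qmin (inf_image_argmin (f := fun q => dist q ^+ m) _ qt) // => q' q't.
by rewrite lerXn2r ?nnegrE ?distZm_ge0 // -qmin min_dist_le.
Qed.

Lemma S1E : (0 < m)%N ->
  S1 A g = (\sum_(1 <= t <oo) (t%:R ^+ n.-1 * min_dist t ^+ m)%:E)%E.
Proof. by move=> m0; apply: eq_eseriesr => t _; rewrite S1_termE. Qed.

Lemma inD_min_dist : (0 < m)%N -> (0 < n)%N -> S1 A g = +oo%E -> inD m n min_dist.
Proof.
move=> m0 n0 S1oo; split; first exact: min_dist_ge0.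
by split; [move=> a b; exact: min_dist_nonincreasing | rewrite -S1E].
Qed.

Lemma not_W_min_dist : ~ W m n min_dist (A, g).
Proof.
apply; apply: sub_finite_set (finite_set1 0) => q /= q_good; apply/eqP.
rewrite -supnormZ_eq0; apply: contraLR q_good; rewrite -lt0n -leNgt => q1.
by apply: min_dist_le; rewrite /punctured_ballZ /= q1 leqnn.
Qed.

Lemma W_of_S1_finite psi : (0 < m)%N -> (0 < n)%N ->
  (forall q, q != 0 -> 0 < dist q) -> (S1 A g < +oo)%E -> inD m n psi -> W m n psi (A, g).
Proof.
move=> m0 n0 dist_gt0 S1_fin [psi0 [psi_nonincr psi_sum]] /= W_fin.
have [T0 T0_ub] := finite_set_ubound (@supnormZ n) _ W_fin.
pose T := maxn T0 1; pose c := min_dist T.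
have c_gt0 : 0 < c by apply: min_dist_gt0; rewrite ?leq_maxr.
(* k psi(t) <= min(c, psi(t)) because psi(t) <= psi(1). *)
pose k := c / (c + psi 1%N).
have k_gt0 : 0 < k by rewrite divr_gt0 ?ltr_wpDr.
have k_le1 : k <= 1 by rewrite ler_pdivrMr ?ltr_wpDr // mul1r lerDl.
have kpsi_le t q : (1 <= t)%N -> punctured_ballZ n t q -> k * psi t <= dist q.
  move=> t1 /andP[q1 qt]; have [qT|Tq] := leqP (supnormZ q) T.
    apply: le_trans (min_dist_le T q _); last by rewrite /punctured_ballZ /= q1.
    apply: le_trans (_ : k * psi 1%N <= c).
      by rewrite ler_wpM2l ?(ltW k_gt0) //; apply: psi_nonincr.
    by rewrite /k mulrAC ler_pdivrMr ?ltr_wpDr // ler_pM2l // lerDr ltW.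
  have psi_q_le : psi (supnormZ q) <= dist q.
    by rewrite leNgt; apply/negP => /T0_ub; rewrite leqNgt (leq_ltn_trans (leq_maxl _ _) Tq).
  apply: le_trans psi_q_le; apply: le_trans (psi_nonincr _ _ q1 qt).
  by rewrite ler_piMl.
have term_le t : (1 <= t)%N ->
    ((k ^+ m)%:E * (t%:R ^+ n.-1 * psi t ^+ m)%:E <= (t%:R ^+ n.-1 * min_dist t ^+ m)%:E)%E.
  move=> t1; rewrite -EFinM lee_fin mulrCA -exprMn ler_wpM2l ?exprn_ge0 ?ler0n //.
  rewrite lerXn2r ?nnegrE ?min_dist_ge0 ?(mulr_ge0 (ltW k_gt0)) //.
  by have [q qt ->] := min_dist_attained (punctured_ballZ_neq0 n0 t1); exact: kpsi_le.
move: S1_fin; rewrite S1E // ltNge => /negP; apply.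
rewrite -(gt0_muley (_ : 0 < (k ^+ m)%:E)%E) ?lte_fin ?exprn_gt0 // -psi_sum.
rewrite -nneseriesZl => [|t _]; last by rewrite lee_fin mulr_ge0 ?exprn_ge0 ?ler0n.
apply: lee_nneseries_from => t t1; last exact: term_le.
by rewrite -EFinM lee_fin (mulr_ge0 (exprn_ge0 _ (ltW k_gt0))) ?mulr_ge0 ?exprn_ge0 ?ler0n.
Qed.

End MinimalDistance.

Theorem corollary2p1 (R : realType) (m n : nat) (A : 'M[R]_(m, n)) (g : 'cV[R]_m) :
  (0 < m)%N -> (0 < n)%N ->
  (forall i j, 0 <= A i j < 1) -> (forall i, 0 <= g i ord0 < 1) ->
  (forall q : 'cV[int]_n, q != 0 -> 0 < distZm (Aqg A g q)) ->
  (Omega m n (A, g) <-> (S1 A g < +oo)%E).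
Proof.
move=> m0 n0 _ _ dist_gt0; split => [Ag_Omega | S1_fin psi psi_D].
  rewrite ltey; apply/eqP => S1oo.
  exact: not_W_min_dist (Ag_Omega _ (inD_min_dist _ _ m0 n0 S1oo)).
exact: W_of_S1_finite.
Qed.
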